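(* Let $G$ be a network with three sources $s_1,s_2,s_3$ and three terminals $t_1,t_2,t_3$ such that every pair $(s_i,t_j)$ is connected by a directed path. If $G$ contains a vertex $v$ with $(c_s(v),c_t(v))\in\{(3,3),(2,3),(3,2)\}$, then for every finite field $\mathbb{F}$ there exists a linear network code over $\mathbb{F}$ under which every terminal recovers $X_1+X_2+X_3$.
   Context: A network is a finite directed acyclic graph (parallel edges allowed), every edge of unit capacity carrying one symbol of a finite field $\mathbb{F}$. Sources have no incoming edges; source $s_i$ holds $X_i\in\mathbb{F}$ (independent, uniform). Terminals have no outgoing edges. In a linear network code each edge leaving a non-source vertex carries an $\mathbb{F}$-linear combination of the symbols on the edges entering its tail; an edge leaving a source carries a multiple of its symbol. For a vertex $v$, $c_s(v)$ is the number of sources $s_i$ with a directed path from $s_i$ to $v$ (a vertex reaches itself), and $c_t(v)$ is the number of terminals $t_j$ with a directed path from $v$ to $t_j$; the pair $(c_s(v),c_t(v))$ is the type of $v$. *)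

From HB Require Import structures.
From mathcomp Require Import all_boot all_order all_algebra all_field.
Set Implicit Arguments. Unset Strict Implicit. Unset Printing Implicit Defensive.
Import GRing.Theory.
Local Open Scope ring_scope.

(* A network: finite vertex type V, finite edge type E (parallel edges
   allowed), each edge e going from [tl e] to [hd e]. *)

Definition adj (V E : finType) (tl hd : E -> V) : rel V :=
  fun u w => [exists e : E, (tl e == u) && (hd e == w)].

Definition reaches (V E : finType) (tl hd : E -> V) (u w : V) : bool :=
  connect (adj tl hd) u w.

Definition acyclic (V E : finType) (tl hd : E -> V) : Prop :=
  forall e : E, ~~ reaches tl hd (hd e) (tl e).

Definition c_s (V E : finType) (tl hd : E -> V) (s : 'I_3 -> V) (v : V) : nat :=
  #|[set i : 'I_3 | reaches tl hd (s i) v]|.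
Definition c_t (V E : finType) (tl hd : E -> V) (t : 'I_3 -> V) (v : V) : nat :=
  #|[set j : 'I_3 | reaches tl hd v (t j)]|.

(* A linear network code over F is given by
   - a : E -> F : an edge leaving source s_i carries  a e * X_i,
   - b : E -> E -> F : an edge e leaving a non-source vertex carries
       \sum_{e' entering tl e} b e' e * (symbol on e').
   [consistent ... X Y] says that Y : E -> F is the edge-symbol assignment
   produced by the code on source messages X.  (On a DAG there is exactly
   one such Y for every X.) *)
Definition consistent (V E : finType) (tl hd : E -> V) (s : 'I_3 -> V)
    (F : fieldType) (a : E -> F) (b : E -> E -> F)
    (X : 'I_3 -> F) (Y : E -> F) : Prop :=
  forall e : E,
    (forall i : 'I_3, tl e = s i -> Y e = a e * X i) /\
    ((forall i : 'I_3, tl e <> s i) ->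
       Y e = \sum_(e' : E | hd e' == tl e) b e' e * Y e').

Definition recovers_sum (V E : finType) (hd : E -> V) (t : 'I_3 -> V)
    (F : fieldType) (d : 'I_3 -> E -> F) (X : 'I_3 -> F) (Y : E -> F)
    (j : 'I_3) : Prop :=
  \sum_(e : E | hd e == t j) d j e * Y e = \sum_(i < 3) X i.

From HB Require Import structures.
From mathcomp Require Import all_boot all_order all_algebra all_field.
Set Implicit Arguments. Unset Strict Implicit. Unset Printing Implicit Defensive.
Import GRing.Theory.
Local Open Scope ring_scope.

(* With coefficients in {0, 1} every edge carries a sum of some of the X_k, so
   it suffices to choose the coefficient-1 edges such that each X_k arrives at
   every vertex that needs it along exactly one of them ([routing]); no
   cancellation is used and any field works.  Let v be the vertex of the
   hypothesis.  The X_k travel to v along an in-tree rooted at v and leave v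
   together towards every vertex below it.  If a source s_k0 does not reach v,
   X_k0 spreads from s_k0 on its own and joins the others where needed.  If v
   does not reach a terminal t0, each X_k leaves the tree towards v at the
   last vertex of its path from which t0 is reachable, and then follows an
   in-tree rooted at t0; this exit vertex is unique, so t0 receives X_k once. *)

Lemma connect_last_step (T : finType) (r : rel T) x y :
  connect r x y -> x != y -> exists w, [/\ connect r x w, r w y & w != y].
Proof.
move/connectP=> [p]; elim: p x => [|z p IH] x /=; first by move=> _ ->; rewrite eqxx.
move=> /andP[rxz pth] ly xy; case: (eqVneq z y) => [ezy|nzy].
  by subst z; exists x; split => //; exact: connect0.
have [w [c1 c2 c3]] := IH z pth ly nzy.
by exists w; split => //; exact: connect_trans (connect1 rxz) c1.
Qed.

Lemma connect_exit (T : finType) (r : rel T) (P : pred T) x z :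
  connect r x z -> P x -> ~~ P z ->
  exists w w', [/\ connect r x w, r w w', P w & ~~ P w'].
Proof.
move/connectP=> [p]; elim: p x => [|y p IH] x /=; first by move=> _ -> ->.
move=> /andP[rxy pth] lz Px nPz; case Py: (P y).
  have [w [w' [c1 c2 c3 c4]]] := IH y pth lz Py nPz.
  by exists w, w'; split => //; exact: connect_trans (connect1 rxy) c1.
by exists x, y; split; [exact: connect0 | exact: rxy | exact: Px | rewrite Py].
Qed.

Lemma fconnect_total (T : finType) (f : T -> T) x a b :
  fconnect f x a -> fconnect f x b -> fconnect f a b || fconnect f b a.
Proof.
move=> /iter_findex <- /iter_findex <-.
case: (leqP (findex f x a) (findex f x b)) => [le|/ltnW le].
  by rewrite -(subnK le) iterD fconnect_iter.
by rewrite -(subnK le) iterD fconnect_iter orbT.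
Qed.

Lemma fconnect_closed (T : finType) (f : T -> T) (P : pred T) x y :
  (forall u, P u -> P (f u)) -> fconnect f x y -> P x -> P y.
Proof.
move=> cl /connectP[p]; elim: p x => [|z p IH] x /=; first by move=> _ ->.
by move=> /andP[/eqP <- pth] ly Px; apply: IH pth ly (cl _ Px).
Qed.

Lemma exists_ord_neq2 n (a b : 'I_n.+3) : exists c : 'I_n.+3, (c != a) && (c != b).
Proof.
case: (pickP (fun c : 'I_n.+3 => (c != a) && (c != b))) => [c h|none]; first by exists c.
have : (#|'I_n.+3| <= #|[set a; b]|)%N.
  apply: subset_leq_card; apply/subsetP => c _; rewrite !inE.
  by move: (none c); case: (c == a); case: (c == b).
by rewrite card_ord cards2 ltnS => /leq_trans/(_ (leq_b1 _)).
Qed.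

Lemma card_ord_setT n (A : {set 'I_n}) : #|A| = n -> forall i, i \in A.
Proof.
move=> h; have : A == setT by rewrite eqEcard subsetT cardsT card_ord h leqnn.
by move/eqP => -> i; rewrite inE.
Qed.

Lemma card_ord_setC1 n (A : {set 'I_n.+1}) :
  #|A| = n -> exists k0, forall i, (i \in A) = (i != k0).
Proof.
move=> h; have /cards1P[k0 hk] : #|~: A| == 1%N.
  by rewrite -(eqn_add2l n) -{1}h cardsC card_ord addn1.
by exists k0 => i; rewrite -[i \in A]negbK -in_setC hk inE.
Qed.

Section Network.

Variables (V E : finType) (tl hd : E -> V) (s t : 'I_3 -> V).
Local Notation R := (reaches tl hd).
Hypothesis acyc : acyclic tl hd.

Lemma reaches_edge e : R (tl e) (hd e).
Proof. by apply: connect1; apply/existsP; exists e; rewrite !eqxx. Qed.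

Lemma reaches_refl u : R u u.
Proof. exact: connect0. Qed.

Lemma reaches_trans u w x : R u w -> R w x -> R u x.
Proof. exact: connect_trans. Qed.

Lemma reaches_last_edge x y : R x y -> x != y -> exists e, hd e = y /\ R x (tl e).
Proof.
move=> r xy; have [w [rxw /existsP[e /andP[/eqP te /eqP he]] _]] := connect_last_step r xy.
by exists e; rewrite te.
Qed.

Lemma reaches_first_edge x y : R x y -> x != y -> exists e, tl e = x /\ R (hd e) y.
Proof.
move/connectP=> [[|z p]] /=; first by move=> _ ->; rewrite eqxx.
move=> /andP[/existsP[e /andP[/eqP te /eqP he]] pth] ly _.
by exists e; split => //; rewrite he; apply/connectP; exists p.
Qed.

Lemma reaches_antisym x y : R x y -> R y x -> x = y.
Proof.
move=> rxy ryx; apply/eqP; apply/negPn/negP => ne.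
have [e [te re]] := reaches_first_edge rxy ne.
by have := acyc e; rewrite te (reaches_trans re ryx).
Qed.

Lemma acyclic_ind (P : V -> Prop) :
  (forall u, (forall e, hd e = u -> P (tl e)) -> P u) -> forall u, P u.
Proof.
move=> IH u; have [n lt] := ubnP #|[set w | R w u]|; elim: n u lt => // n IHn u lt.
apply: IH => e he; apply: IHn; rewrite -he ltnS in lt; apply: leq_trans _ lt.
apply: proper_card; apply/properP; split.
  by apply/subsetP => w; rewrite !inE => r; exact: reaches_trans r (reaches_edge e).
by exists (hd e); rewrite !inE ?reaches_refl ?acyc.
Qed.

Lemma acyclic_ind_rev (P : V -> Prop) :
  (forall u, (forall e, tl e = u -> P (hd e)) -> P u) -> forall u, P u.
Proof.
move=> IH u; have [n lt] := ubnP #|[set w | R u w]|; elim: n u lt => // n IHn u lt.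
apply: IH => e he; apply: IHn; rewrite -he ltnS in lt; apply: leq_trans _ lt.
apply: proper_card; apply/properP; split.
  by apply/subsetP => w; rewrite !inE => r; exact: reaches_trans (reaches_edge e) r.
by exists (tl e); rewrite !inE ?reaches_refl ?acyc.
Qed.

(* Coefficient 1 on the edges of [P] and 0 elsewhere; [c u k] records that X_k
   occurs in the symbol leaving u. *)
Record routing (P : pred E) (c : V -> 'I_3 -> bool) : Prop := Routing {
  routing_source : forall i k, c (s i) k = (i == k);
  routing_in_ex : forall u k, (forall i, u != s i) -> c u k ->
    exists e, [/\ P e, hd e = u & c (tl e) k];
  routing_in_uniq : forall e1 e2 k, P e1 -> P e2 -> hd e1 = hd e2 ->
    c (tl e1) k -> c (tl e2) k -> e1 = e2;
  routing_forward : forall e k, P e -> c (tl e) k -> c (hd e) k;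
  routing_terminal : forall j k, c (t j) k }.

Section Routing.

Variables (K : fieldType) (P : pred E) (c : V -> 'I_3 -> bool).
Hypothesis rt : routing P c.

Lemma routing_in_count u k : (forall i, u != s i) ->
  \sum_(e | hd e == u) ((P e && c (tl e) k)%:R : K) = (c u k)%:R.
Proof.
move=> ns; case cuk: (c u k).
  have [e0 [Pe0 he0 ce0]] := routing_in_ex rt ns cuk.
  rewrite (bigD1 e0) /= ?he0 // Pe0 ce0 big1 ?addr0 // => e /andP[/eqP he ne].
  case: (boolP (P e && c (tl e) k)) => [/andP[Pe ce]|] //.
  by move: ne; rewrite (routing_in_uniq rt Pe Pe0 _ ce ce0) ?eqxx // he he0.
rewrite big1 // => e /eqP he; case: (boolP (P e && c (tl e) k)) => [/andP[Pe ce]|] //.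
by move: (routing_forward rt Pe ce); rewrite he cuk.
Qed.

Lemma sum_code_of_routing :
  exists (a : E -> K) (b : E -> E -> K) (d : 'I_3 -> E -> K),
    forall X Y, consistent tl hd s a b X Y -> forall j, recovers_sum hd t d X Y j.
Proof.
exists (fun _ => 1), (fun e _ => (P e)%:R), (fun _ e => (P e)%:R) => X Y cons.
pose sum_at u := \sum_(k < 3) (c u k)%:R * X k.
have in_sum u : (forall i, u != s i) ->
    (forall e, hd e = u -> P e -> Y e = sum_at (tl e)) ->
    \sum_(e | hd e == u) (P e)%:R * Y e = sum_at u.
  move=> ns IH; transitivity (\sum_(e | hd e == u) \sum_(k < 3) (P e && c (tl e) k)%:R * X k).
    apply: eq_bigr => e /eqP he; case: (boolP (P e)) => Pe /=.
      by rewrite mul1r (IH e he Pe).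
    by rewrite mul0r big1 // => k _; rewrite mul0r.
  by rewrite exchange_big; apply: eq_bigr => k _; rewrite -mulr_suml routing_in_count.
have P_edge u e : tl e = u -> P e -> Y e = sum_at u.
  elim/acyclic_ind: u e => u IH e te Pe; have [Ysrc Yint] := cons e.
  case: (pickP (fun i => u == s i)) => [i /eqP ui|nsrc].
    rewrite (Ysrc i) -?ui // mul1r /sum_at ui (bigD1 i) //= (routing_source rt) eqxx mul1r.
    by rewrite big1 ?addr0 // => k ne; rewrite (routing_source rt) eq_sym (negbTE ne) mul0r.
  rewrite Yint => [|i]; last by apply/eqP; rewrite te nsrc.
  rewrite te in_sum => [//|i|e' he' Pe']; first by rewrite nsrc.
  exact: IH he' e' erefl Pe'.
move=> j; rewrite /recovers_sum in_sum => [|i|e he Pe]; last exact: P_edge.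
  by apply: eq_bigr => k _; rewrite (routing_terminal rt) mul1r.
have [k ne] : exists k, k != i by have [k /andP[ne _]] := exists_ord_neq2 i i; exists k.
apply/eqP => ti; move: (routing_terminal rt j k).
by rewrite ti (routing_source rt) eq_sym (negbTE ne).
Qed.

End Routing.

Section Forwarding.

Variables (z : V) (Q : pred V).

(* Greedy routing towards [z]: a vertex u != z reaching z follows one of its
   out-edges towards z, preferring one whose head satisfies [Q]; the walks
   [fconnect fwd] form an in-tree rooted at z. *)
Definition fwd_edge (u : V) : option E :=
  if u == z then None else
  if [pick e | (tl e == u) && R (hd e) z && Q (hd e)] is Some e then Some e
  else [pick e | (tl e == u) && R (hd e) z].

Definition fwd (u : V) : V := if fwd_edge u is Some e then hd e else u.

Lemma fwd_edgeP u e : fwd_edge u = Some e -> [/\ tl e = u, R (hd e) z & u != z].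
Proof.
rewrite /fwd_edge; case: eqP => // /eqP nz.
case: pickP => [e' /andP[/andP[/eqP te r] _] [<-] //|_].
by case: pickP => // e' /andP[/eqP te r] [<-].
Qed.

Lemma fwd_edge_exists u : R u z -> u != z -> exists e, fwd_edge u = Some e.
Proof.
move=> r nz; rewrite /fwd_edge (negbTE nz).
case: pickP => [e _|_]; first by exists e.
case: pickP => [e _|none]; first by exists e.
have [e [te re]] := reaches_first_edge r nz; by move: (none e); rewrite te eqxx re.
Qed.

Lemma fwd_edge_pref u e : fwd_edge u = Some e -> ~~ Q (hd e) ->
  forall e', tl e' = u -> R (hd e') z -> ~~ Q (hd e').
Proof.
rewrite /fwd_edge; case: eqP => // _.
case: pickP => [e0 /andP[_ q] [<-]|none _]; first by rewrite q.
by move=> nq e' te re; apply/negP => q; move: (none e'); rewrite te eqxx re q.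
Qed.

Lemma fwdE u e : fwd_edge u = Some e -> fwd u = hd e.
Proof. by rewrite /fwd => ->. Qed.

Lemma fwd_moved u : fwd u != u -> exists e, [/\ fwd_edge u = Some e, tl e = u & hd e = fwd u].
Proof.
rewrite /fwd; case fe: (fwd_edge u) => [e|]; last by rewrite eqxx.
by have [te _ _] := fwd_edgeP fe; exists e.
Qed.

Lemma fconnect_fwd_closed (P : pred V) x y :
  (forall e, P (tl e) -> P (hd e)) -> fconnect fwd x y -> P x -> P y.
Proof.
move=> cl; apply: fconnect_closed => u Pu; case: (eqVneq (fwd u) u) => [-> //|].
by case/fwd_moved => e [_ te <-]; apply: cl; rewrite te.
Qed.

Lemma fconnect_fwd_reaches x y : fconnect fwd x y -> R x y.
Proof.
move=> c; apply: (fconnect_fwd_closed (P := R x)) c (reaches_refl x) => e r.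
exact: reaches_trans r (reaches_edge e).
Qed.

Lemma fconnect_fwd_reaches_root x y : fconnect fwd x y -> R x z -> R y z.
Proof.
apply: (fconnect_closed (P := fun u => R u z)) => u r; case: (eqVneq (fwd u) u) => [-> //|].
by case/fwd_moved => e [fe _ <-]; case: (fwd_edgeP fe).
Qed.

Lemma fconnect_fwd_root x : R x z -> fconnect fwd x z.
Proof.
elim/acyclic_ind_rev: x => x IH r; case: (eqVneq x z) => [-> |nz]; first exact: connect0.
have [e fe] := fwd_edge_exists r nz; have [te re _] := fwd_edgeP fe.
by apply: connect_trans (fconnect1 _ x) _; rewrite (fwdE fe); exact: IH.
Qed.

Lemma fwd_in_edge x u : fconnect fwd x u -> x != u ->
  exists e, [/\ fwd_edge (tl e) = Some e, hd e = u & fconnect fwd x (tl e)].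
Proof.
move=> c xu; have [w [cw /eqP fw wu]] := connect_last_step c xu.
have [|e [fe te he]] := fwd_moved (u := w); first by rewrite fw eq_sym.
by exists e; rewrite te he fw.
Qed.

Lemma fwd_forward x e : fwd_edge (tl e) = Some e ->
  fconnect fwd x (tl e) -> fconnect fwd x (hd e).
Proof. by move=> fe c; rewrite -(fwdE fe); exact: connect_trans c (fconnect1 _ _). Qed.

Lemma fwd_in_uniq x e1 e2 : fwd_edge (tl e1) = Some e1 -> fwd_edge (tl e2) = Some e2 ->
  hd e1 = hd e2 -> fconnect fwd x (tl e1) -> fconnect fwd x (tl e2) -> e1 = e2.
Proof.
have ordered f1 f2 : fwd_edge (tl f1) = Some f1 -> fwd_edge (tl f2) = Some f2 ->
    hd f1 = hd f2 -> fconnect fwd (tl f1) (tl f2) -> tl f1 = tl f2.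
  move=> fe1 fe2 h12; apply: contraTeq => ne.
  rewrite fconnect_eqVf (negbTE ne) /= (fwdE fe1) h12.
  by apply/negP => /fconnect_fwd_reaches r; have := acyc f2; rewrite r.
move=> fe1 fe2 h12 c1 c2; suff t12 : tl e1 = tl e2.
  by move: fe1; rewrite t12 fe2 => -[].
by case/orP: (fconnect_total c1 c2) => c; [|apply/esym]; apply: ordered c.
Qed.

End Forwarding.

Definition in_from (w u : V) : option E := [pick e | (hd e == u) && R w (tl e)].

Lemma in_fromP w u e : in_from w u = Some e -> hd e = u /\ R w (tl e).
Proof. by rewrite /in_from; case: pickP => // e' /andP[/eqP ? ?] [<-]. Qed.

Lemma in_from_exists w u : R w u -> w != u -> exists e, in_from w u = Some e.
Proof.
move=> rwu wu; rewrite /in_from; case: pickP => [e _|none]; first by exists e.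
by have [e [he re]] := reaches_last_edge rwu wu; move: (none e); rewrite he eqxx re.
Qed.

Hypothesis s_inj : injective s.
Hypothesis t_inj : injective t.
Hypothesis hd_neq_s : forall i e, hd e != s i.
Hypothesis tl_neq_t : forall j e, tl e != t j.
Hypothesis reaches_st : forall i j, R (s i) (t j).

Lemma reaches_source x i : R x (s i) -> x = s i.
Proof.
move=> r; apply/eqP/negPn/negP => ne.
by have [e [he _]] := reaches_last_edge r ne; move: (hd_neq_s i e); rewrite he eqxx.
Qed.

Lemma terminal_reaches j x : R (t j) x -> x = t j.
Proof.
move=> r; apply/eqP/negPn/negP; rewrite eq_sym => ne.
by have [e [te _]] := reaches_first_edge r ne; move: (tl_neq_t j e); rewrite te eqxx.
Qed.

Lemma fconnect_fwd_source z Q i k : fconnect (fwd z Q) (s i) (s k) = (i == k).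
Proof.
apply/idP/eqP => [/fconnect_fwd_reaches/reaches_source/s_inj //|->].
exact: connect0.
Qed.

Section ReachesAllTerminals.

Variables (v : V) (ob : option 'I_3).
Hypothesis reaches_s_v : forall k, R (s k) v = (ob != Some k).
Hypothesis reaches_v_t : forall j, R v (t j).

Local Notation fwdv := (fwd v predT).
Local Notation fwd_edgev := (fwd_edge v predT).

Definition is_k0 k := ob == Some k.
Definition from_k0 u := if ob is Some k0 then R (s k0) u else false.

Definition in_k0 u := if ob is Some k0 then in_from (s k0) u else None.

(* Outside the tree towards v, the X_k with k != k0 travel together from v and
   X_k0 comes from s_k0.  A vertex needing both uses the edge [in_from v u]
   alone if its tail also carries X_k0, else [in_k0 u] alone if its tail is
   below v, else both. *)
Definition use_below u := R v u &&
  [|| from_k0 (oapp tl u (in_from v u)), ~~ from_k0 u | ~~ R v (oapp tl u (in_k0 u))].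
Definition use_k0 u := from_k0 u && (~~ from_k0 (oapp tl u (in_from v u)) || ~~ R v u).

Definition activeA e := (fwd_edgev (tl e) == Some e) ||
  ~~ R (hd e) v && (((in_from v (hd e) == Some e) && use_below (hd e)) ||
                    ((in_k0 (hd e) == Some e) && use_k0 (hd e))).

Definition labelA u k :=
  if R u v then fconnect fwdv (s k) u else if is_k0 k then from_k0 u else R v u.

Lemma from_k0_above u : from_k0 u -> ~~ R u v.
Proof.
rewrite /from_k0; case ob0: ob => [k0|] // r; apply/negP => ruv.
by move: (reaches_s_v k0); rewrite (reaches_trans r ruv) ob0 eqxx.
Qed.

Lemma from_k0_trans u w : from_k0 u -> R u w -> from_k0 w.
Proof. by rewrite /from_k0; case: ob => // k0; exact: reaches_trans. Qed.

Lemma labelA_below u k : ~~ R u v -> labelA u k = if is_k0 k then from_k0 u else R v u.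
Proof. by rewrite /labelA => /negbTE ->. Qed.

Lemma labelA_v k : labelA v k = ~~ is_k0 k.
Proof.
rewrite /labelA reaches_refl /is_k0 -reaches_s_v.
by apply/idP/idP => [/fconnect_fwd_reaches|/fconnect_fwd_root].
Qed.

Lemma labelA_from_v w k : R v w -> labelA w k = (if is_k0 k then from_k0 w else true).
Proof.
move=> rvw; case: (boolP (R w v)) => [rwv|nrwv]; last by rewrite labelA_below ?rvw.
rewrite (reaches_antisym rwv rvw) labelA_v; case: (is_k0 k) => //.
by apply/esym/negbTE/negP => /from_k0_above; rewrite reaches_refl.
Qed.

Lemma labelA_from_k0 w k : from_k0 w -> is_k0 k -> labelA w k.
Proof. by move=> r k0; rewrite labelA_below ?k0 ?from_k0_above. Qed.

Lemma in_k0P u e : in_k0 u = Some e -> hd e = u /\ from_k0 (tl e).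
Proof. by rewrite /in_k0 /from_k0; case: ob => // k0; exact: in_fromP. Qed.

Lemma in_k0_exists u : from_k0 u -> (forall i, u != s i) -> exists e, in_k0 u = Some e.
Proof.
rewrite /in_k0 /from_k0; case: ob => // k0 r ns.
exact: in_from_exists r (contra_neq esym (ns k0)).
Qed.

Lemma activeA_above e : activeA e -> R (hd e) v -> fwd_edgev (tl e) = Some e.
Proof. by case/orP => [/eqP //|/andP[/negP]]. Qed.

Lemma activeA_below e : activeA e -> ~~ R (hd e) v ->
  (in_from v (hd e) = Some e /\ use_below (hd e)) \/ (in_k0 (hd e) = Some e /\ use_k0 (hd e)).
Proof.
case/orP => [/eqP fe|/andP[_ /orP[/andP[/eqP ? ?]|/andP[/eqP ? ?]]]]; [|by left|by right].
by have [_ r _] := fwd_edgeP fe; rewrite r.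
Qed.

Lemma use_both_disjoint u e1 e2 k : in_from v u = Some e1 -> use_below u ->
  in_k0 u = Some e2 -> use_k0 u -> labelA (tl e1) k -> labelA (tl e2) k -> False.
Proof.
move=> p1 /andP[d h] p2 /andP[r h']; rewrite p1 p2 /= d r /= orbF in h h'.
rewrite (negbTE h') /= in h; have [_ /from_k0_above nr2] := in_k0P p2.
have [_ d1] := in_fromP p1; rewrite (labelA_below _ nr2) (labelA_from_v _ d1).
by case: (is_k0 k); rewrite ?(negbTE h') // (negbTE h).
Qed.

Lemma labelA_source i k : labelA (s i) k = (i == k).
Proof.
rewrite /labelA; case: (boolP (R (s i) v)) => [_|]; first by rewrite fconnect_fwd_source eq_sym.
rewrite reaches_s_v negbK /is_k0 /from_k0 => /eqP ob_i; rewrite ob_i.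
have [<-|ne] := eqVneq i k; first by rewrite eqxx reaches_refl.
rewrite (inj_eq (@Some_inj _)) (negbTE ne); apply/negP => /reaches_source vs.
by move: (reaches_s_v i); rewrite ob_i -vs reaches_refl eqxx.
Qed.

Lemma labelA_in_edge_below u k : ~~ R u v -> (forall i, u != s i) -> labelA u k ->
  exists e, [/\ activeA e, hd e = u & labelA (tl e) k].
Proof.
move=> nr ns; rewrite labelA_below //.
have vu : v != u by apply: contraNneq nr => <-; exact: reaches_refl.
have act e : hd e = u ->
    ((in_from v u == Some e) && use_below u) || ((in_k0 u == Some e) && use_k0 u) -> activeA e.
  by move=> he h; rewrite /activeA he nr h orbT.
case k0: (is_k0 k) => lab.
  case: (boolP (use_k0 u)) => [uk|].
    have [e pe] := in_k0_exists lab ns; have [he re] := in_k0P pe.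
    by exists e; split; [rewrite act // pe eqxx uk orbT | | exact: labelA_from_k0].
  rewrite /use_k0 lab negb_or !negbK => /andP[rt rvu].
  have [e pe] := in_from_exists rvu vu; have [he _] := in_fromP pe.
  rewrite pe /= in rt; exists e; split=> //; last exact: labelA_from_k0.
  by rewrite act // pe eqxx /use_below rvu pe rt.
case: (boolP (use_below u)) => [ub|].
  have [e pe] := in_from_exists lab vu; have [he de] := in_fromP pe.
  by exists e; split; [rewrite act // pe eqxx ub | | rewrite labelA_from_v ?k0].
rewrite /use_below lab /= !negb_or !negbK => /andP[nrt /andP[rk0 dts]].
have [e pe] := in_k0_exists rk0 ns; have [he _] := in_k0P pe.
rewrite pe /= in dts; exists e; split => //; last by rewrite labelA_from_v ?k0.
by rewrite act // pe eqxx /use_k0 rk0 nrt orbT.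
Qed.

Lemma labelA_in_edge u k : (forall i, u != s i) -> labelA u k ->
  exists e, [/\ activeA e, hd e = u & labelA (tl e) k].
Proof.
move=> ns; case: (boolP (R u v)) => [ruv|nr]; last exact: labelA_in_edge_below.
rewrite /labelA ruv => c; have [e [fe he ce]] := fwd_in_edge c (contra_neq esym (ns k)).
have rtv : R (tl e) v by apply: reaches_trans (reaches_edge e) _; rewrite he.
by exists e; rewrite /activeA fe eqxx /labelA rtv.
Qed.

Lemma labelA_in_uniq e1 e2 k : activeA e1 -> activeA e2 -> hd e1 = hd e2 ->
  labelA (tl e1) k -> labelA (tl e2) k -> e1 = e2.
Proof.
move=> a1 a2 h12 c1 c2; case: (boolP (R (hd e1) v)) => [r1|nr1].
  have r2 : R (hd e2) v by rewrite -h12.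
  have rt1 := reaches_trans (reaches_edge e1) r1.
  have rt2 := reaches_trans (reaches_edge e2) r2.
  rewrite /labelA rt1 in c1; rewrite /labelA rt2 in c2.
  exact: fwd_in_uniq (activeA_above a1 r1) (activeA_above a2 r2) h12 c1 c2.
have nr2 : ~~ R (hd e2) v by rewrite -h12.
case: (activeA_below a1 nr1) => [[p1 u1]|[p1 u1]];
  case: (activeA_below a2 nr2) => [[p2 u2]|[p2 u2]]; rewrite -h12 in p2 u2.
- by move: p1; rewrite p2 => -[].
- by case: (use_both_disjoint p1 u1 p2 u2 c1 c2).
- by case: (use_both_disjoint p2 u2 p1 u1 c2 c1).
- by move: p1; rewrite p2 => -[].
Qed.

Lemma labelA_forward e k : activeA e -> labelA (tl e) k -> labelA (hd e) k.
Proof.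
move=> a; case: (boolP (R (hd e) v)) => [r|nr].
  rewrite /labelA r (reaches_trans (reaches_edge e) r).
  exact: fwd_forward (activeA_above a r).
rewrite (labelA_below _ nr); case: (activeA_below a nr) => [[p _]|[p _]].
  have [_ d] := in_fromP p; rewrite (labelA_from_v _ d) (reaches_trans d (reaches_edge e)).
  by case: (is_k0 k) => // c; exact: from_k0_trans c (reaches_edge e).
have [_ r] := in_k0P p; rewrite (labelA_below _ (from_k0_above r)).
by case: (is_k0 k) => c; [apply: from_k0_trans c _ | apply: reaches_trans c _];
  exact: reaches_edge.
Qed.

Lemma labelA_terminal j k : labelA (t j) k.
Proof.
have [j' /andP[ne _]] := exists_ord_neq2 j j.
have nr : ~~ R (t j) v.
  apply/negP => /terminal_reaches vt; move: (reaches_v_t j').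
  by rewrite vt => /terminal_reaches/t_inj/eqP; rewrite (negbTE ne).
rewrite labelA_below //; case k0: (is_k0 k); last exact: reaches_v_t.
by move: k0; rewrite /is_k0 /from_k0 => /eqP ->.
Qed.

Lemma routingA : routing activeA labelA.
Proof.
exact: Routing labelA_source labelA_in_edge labelA_in_uniq labelA_forward labelA_terminal.
Qed.

End ReachesAllTerminals.

Section ReachedByAllSources.

Variables (v : V) (j0 : 'I_3).
Hypothesis reaches_s_v : forall k, R (s k) v.
Hypothesis reaches_v_t : forall j, R v (t j) = (j != j0).

Local Notation t0 := (t j0).
Local Notation fwdv := (fwd v (R^~ t0)).
Local Notation fwd_edgev := (fwd_edge v (R^~ t0)).
Local Notation fwdt := (fwd t0 predT).
Local Notation fwd_edget := (fwd_edge t0 predT).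

(* X_k follows the tree towards v, which keeps to the vertices reaching t0 as
   long as it can.  Since v does not reach t0, the walk from s_k leaves them at
   a last vertex, its exit; an exit edge then leads out of the region above v,
   and the tree towards t0 carries X_k on to t0.  The other terminals get
   everything from v. *)
Definition is_exit x := [&& R x v, R x t0 & ~~ R (fwdv x) t0].
Definition exit_edge x := [pick e | (tl e == x) && R (hd e) t0 && ~~ R (hd e) v].
Definition via_exit k u := [exists x, is_exit x && fconnect fwdv (s k) x &&
  oapp (fun e => fconnect fwdt (hd e) u) false (exit_edge x)].

Definition activeB e := [|| fwd_edgev (tl e) == Some e,
  is_exit (tl e) && (exit_edge (tl e) == Some e),
  ~~ R (tl e) v && (fwd_edget (tl e) == Some e)
| [&& ~~ R (hd e) v, ~~ R (hd e) t0 & in_from v (hd e) == Some e]].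

Definition labelB u k :=
  if R u v then fconnect fwdv (s k) u else if R u t0 then via_exit k u else R v u.

Lemma v_not_reaches_t0 : ~~ R v t0.
Proof. by rewrite reaches_v_t eqxx. Qed.

Lemma t0_not_reaches_v : ~~ R t0 v.
Proof.
apply/negP => /terminal_reaches vt; have := v_not_reaches_t0.
by rewrite vt reaches_refl.
Qed.

Lemma below_not_reaches_t0 u : R v u -> ~~ R u t0.
Proof. by move=> d; apply: contra v_not_reaches_t0; exact: reaches_trans. Qed.

Lemma not_above_forward e : ~~ R (tl e) v -> ~~ R (hd e) v.
Proof. by apply: contra; exact: reaches_trans (reaches_edge e). Qed.

Lemma exit_uniq k x1 x2 : is_exit x1 -> is_exit x2 ->
  fconnect fwdv (s k) x1 -> fconnect fwdv (s k) x2 -> x1 = x2.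
Proof.
have ordered y1 y2 : is_exit y1 -> is_exit y2 -> fconnect fwdv y1 y2 -> y1 = y2.
  move=> /and3P[_ _ n1] /and3P[_ r2 _]; apply: contraTeq => ne.
  rewrite fconnect_eqVf (negbTE ne) /=; apply/negP => /fconnect_fwd_reaches r.
  by rewrite (reaches_trans r r2) in n1.
move=> ex1 ex2 c1 c2; case/orP: (fconnect_total c1 c2) => c; first exact: ordered.
by apply/esym; exact: ordered.
Qed.

Lemma exit_exists k : exists x, is_exit x && fconnect fwdv (s k) x.
Proof.
have c : fconnect fwdv (s k) v := fconnect_fwd_root _ (reaches_s_v k).
have [w [w' [cw /eqP fw rw nrw']]] :=
  connect_exit (P := R^~ t0) c (reaches_st k j0) v_not_reaches_t0.
exists w; rewrite cw /is_exit rw fw nrw' !andbT.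
exact: fconnect_fwd_reaches_root cw (reaches_s_v k).
Qed.

Lemma exit_edgeP x e : exit_edge x = Some e -> [/\ tl e = x, R (hd e) t0 & ~~ R (hd e) v].
Proof. by rewrite /exit_edge; case: pickP => // e' /andP[/andP[/eqP ? ?] ?] [<-]. Qed.

(* An exit reaches t0 through some out-edge, but its tree edge leaves the
   vertices reaching t0; by the preference of the tree, no head of an out-edge
   reaches both v and t0. *)
Lemma exit_edge_exists x : is_exit x -> exists e, exit_edge x = Some e.
Proof.
case/and3P=> xv xt nft; rewrite /exit_edge; case: pickP => [e _|none]; first by exists e.
have xt0 : x != t0 by apply: contraTneq xv => ->; exact: t0_not_reaches_v.
have [e [te re]] := reaches_first_edge xt xt0.
have xv0 : x != v by apply: contraTneq xt => ->; exact: v_not_reaches_t0.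
have [e0 fe0] := fwd_edge_exists (R^~ t0) xv xv0.
have nq : ~~ R (hd e0) t0 by rewrite -(fwdE fe0).
have pref := fwd_edge_pref fe0 nq te.
case: (boolP (R (hd e) v)) => [rv|nrv]; first by move: (pref rv); rewrite /= re.
by move: (none e); rewrite te eqxx re nrv.
Qed.

Lemma via_exitP k u : via_exit k u -> exists x e0,
  [/\ is_exit x, fconnect fwdv (s k) x, exit_edge x = Some e0 & fconnect fwdt (hd e0) u].
Proof.
case/existsP=> x /andP[/andP[ex cx]]; case fe: (exit_edge x) => [e0|] //= c0.
by exists x, e0.
Qed.

Lemma labelB_region u k : ~~ R u v -> R u t0 -> labelB u k = via_exit k u.
Proof. by rewrite /labelB => /negbTE -> ->. Qed.

Lemma labelB_below u k : ~~ R u v -> ~~ R u t0 -> labelB u k = R v u.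
Proof. by rewrite /labelB => /negbTE -> /negbTE ->. Qed.

Lemma labelB_from_v u k : R v u -> labelB u k.
Proof.
move=> d; case: (boolP (R u v)) => [uv|nuv].
  by rewrite /labelB uv (reaches_antisym uv d); exact: fconnect_fwd_root.
by rewrite labelB_below ?below_not_reaches_t0.
Qed.

Lemma labelB_exit x k : is_exit x -> labelB x k -> fconnect fwdv (s k) x.
Proof. by case/and3P=> xv _ _; rewrite /labelB xv. Qed.

Lemma activeB_above e : activeB e -> R (hd e) v -> fwd_edgev (tl e) = Some e.
Proof.
case/or4P => [/eqP // | /andP[_ /eqP fe] | /andP[nv _] | /and3P[nv _ _]] rv.
- by have [_ _ /negP] := exit_edgeP fe.
- by move: (not_above_forward nv); rewrite rv.
- by rewrite rv in nv.
Qed.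

Lemma activeB_region e : activeB e -> ~~ R (hd e) v -> R (hd e) t0 ->
  is_exit (tl e) && (exit_edge (tl e) == Some e) ||
  ~~ R (tl e) v && (fwd_edget (tl e) == Some e).
Proof.
case/or4P => [/eqP fe | -> // | -> | /and3P[_ nt _]] nv rt; rewrite ?orbT //.
- by have [_ rv _] := fwd_edgeP fe; rewrite rv in nv.
- by rewrite rt in nt.
Qed.

Lemma activeB_below e : activeB e -> ~~ R (hd e) v -> ~~ R (hd e) t0 ->
  in_from v (hd e) = Some e.
Proof.
case/or4P => [/eqP fe | /andP[_ /eqP fe] | /andP[_ /eqP fe] | /and3P[_ _ /eqP //]] nv nt.
- by have [_ rv _] := fwd_edgeP fe; rewrite rv in nv.
- by have [_ rt _] := exit_edgeP fe; rewrite rt in nt.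
- by have [_ rt _] := fwd_edgeP fe; rewrite rt in nt.
Qed.

Lemma exit_edge_tree_disjoint e1 e2 k : is_exit (tl e1) -> exit_edge (tl e1) = Some e1 ->
  ~~ R (tl e2) v -> fwd_edget (tl e2) = Some e2 -> hd e1 = hd e2 ->
  labelB (tl e1) k -> labelB (tl e2) k -> False.
Proof.
move=> x1 fe1 nv2 fe2 h12 c1 c2; have c1' := labelB_exit x1 c1.
have [_ rt2 _] := fwd_edgeP fe2.
have rt2' : R (tl e2) t0 := reaches_trans (reaches_edge e2) rt2.
rewrite labelB_region // in c2; have [x [e0 [ex cx fe0 c0]]] := via_exitP c2.
rewrite (exit_uniq ex x1 cx c1') fe1 in fe0; case: fe0 => e10.
rewrite -e10 h12 in c0.
by have := acyc e2; rewrite (fconnect_fwd_reaches c0).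
Qed.

Lemma labelB_source i k : labelB (s i) k = (i == k).
Proof. by rewrite /labelB reaches_s_v fconnect_fwd_source eq_sym. Qed.

Lemma labelB_in_edge_region u k : ~~ R u v -> R u t0 -> labelB u k ->
  exists e, [/\ activeB e, hd e = u & labelB (tl e) k].
Proof.
move=> nuv ut; rewrite labelB_region // => /via_exitP[x [e0 [ex cx fe0 c0]]].
have [te0 _ nv0] := exit_edgeP fe0.
have [h0|hne] := eqVneq (hd e0) u.
  exists e0; split => //; first by rewrite /activeB te0 ex fe0 eqxx orbT.
  by rewrite te0 /labelB; case/and3P: (ex) => ->.
have [e [fe he ce]] := fwd_in_edge c0 hne.
have nte : ~~ R (tl e) v := fconnect_fwd_closed (P := fun w => ~~ R w v) not_above_forward ce nv0.
have [_ rt _] := fwd_edgeP fe.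
exists e; split => //; first by rewrite /activeB nte fe eqxx !orbT.
rewrite labelB_region ?(reaches_trans (reaches_edge e) rt) //.
by apply/existsP; exists x; rewrite ex cx fe0.
Qed.

Lemma labelB_in_edge u k : (forall i, u != s i) -> labelB u k ->
  exists e, [/\ activeB e, hd e = u & labelB (tl e) k].
Proof.
move=> ns; case: (boolP (R u v)) => [uv|nuv].
  rewrite /labelB uv => c; have [e [fe he ce]] := fwd_in_edge c (contra_neq esym (ns k)).
  have rtv : R (tl e) v by apply: reaches_trans (reaches_edge e) _; rewrite he.
  by exists e; rewrite /activeB fe eqxx /labelB rtv.
case: (boolP (R u t0)) => [ut|nut]; first exact: labelB_in_edge_region.
rewrite labelB_below // => d.
have vu : v != u by apply: contraNneq nuv => <-; exact: reaches_refl.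
have [e pe] := in_from_exists d vu; have [he de] := in_fromP pe.
exists e; split => //; last exact: labelB_from_v.
by rewrite /activeB he nuv nut pe eqxx !orbT.
Qed.

Lemma labelB_in_uniq_region e1 e2 k : activeB e1 -> activeB e2 -> hd e1 = hd e2 ->
  ~~ R (hd e1) v -> R (hd e1) t0 -> labelB (tl e1) k -> labelB (tl e2) k -> e1 = e2.
Proof.
move=> a1 a2 h12 nv rt c1 c2.
have := activeB_region a2; rewrite -h12 => /(_ nv rt) act2.
case/orP: (activeB_region a1 nv rt) => /andP[x1 /eqP fe1];
  case/orP: act2 => /andP[x2 /eqP fe2].
- have ex := exit_uniq x1 x2 (labelB_exit x1 c1) (labelB_exit x2 c2).
  by move: fe1; rewrite ex fe2 => -[].
- by case: (exit_edge_tree_disjoint x1 fe1 x2 fe2 h12 c1 c2).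
- by case: (exit_edge_tree_disjoint x2 fe2 x1 fe1 (esym h12) c2 c1).
have [_ rt1 _] := fwd_edgeP fe1; have [_ rt2 _] := fwd_edgeP fe2.
rewrite labelB_region ?(reaches_trans (reaches_edge e1) rt1) // in c1.
rewrite labelB_region ?(reaches_trans (reaches_edge e2) rt2) // in c2.
have [y1 [f1 [ey1 cy1 fy1 d1]]] := via_exitP c1.
have [y2 [f2 [ey2 cy2 fy2 d2]]] := via_exitP c2.
rewrite (exit_uniq ey1 ey2 cy1 cy2) fy2 in fy1; case: fy1 => ef; rewrite ef in d2.
exact: fwd_in_uniq fe1 fe2 h12 d1 d2.
Qed.

Lemma labelB_in_uniq e1 e2 k : activeB e1 -> activeB e2 -> hd e1 = hd e2 ->
  labelB (tl e1) k -> labelB (tl e2) k -> e1 = e2.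
Proof.
move=> a1 a2 h12 c1 c2; case: (boolP (R (hd e1) v)) => [r1|nr1].
  have r2 : R (hd e2) v by rewrite -h12.
  have rt1 := reaches_trans (reaches_edge e1) r1.
  have rt2 := reaches_trans (reaches_edge e2) r2.
  rewrite /labelB rt1 in c1; rewrite /labelB rt2 in c2.
  exact: fwd_in_uniq (activeB_above a1 r1) (activeB_above a2 r2) h12 c1 c2.
case: (boolP (R (hd e1) t0)) => [t1|nt1]; first exact: labelB_in_uniq_region a1 a2 h12 nr1 t1 c1 c2.
have := activeB_below a2; rewrite -h12 (activeB_below a1 nr1 nt1) => /(_ nr1 nt1).
by case.
Qed.

Lemma labelB_forward e k : activeB e -> labelB (tl e) k -> labelB (hd e) k.
Proof.
move=> a; case: (boolP (R (hd e) v)) => [r|nr].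
  rewrite /labelB r (reaches_trans (reaches_edge e) r).
  exact: fwd_forward (activeB_above a r).
case: (boolP (R (hd e) t0)) => [rt|nt]; last first.
  have [_ d] := in_fromP (activeB_below a nr nt) => _.
  exact: labelB_from_v (reaches_trans d (reaches_edge e)).
rewrite (labelB_region _ nr rt); case/orP: (activeB_region a nr rt) => /andP[x /eqP fe] c.
  by apply/existsP; exists (tl e); rewrite x (labelB_exit x c) fe /= connect0.
have [_ rte _] := fwd_edgeP fe.
rewrite labelB_region ?(reaches_trans (reaches_edge e) rte) // in c.
have [y [e0 [ey cy fe0 c0]]] := via_exitP c.
by apply/existsP; exists y; rewrite ey cy fe0 /= (fwd_forward fe c0).
Qed.

Lemma labelB_terminal j k : labelB (t j) k.
Proof.
have [->|ne] := eqVneq j j0; last by apply: labelB_from_v; rewrite reaches_v_t.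
rewrite labelB_region ?reaches_refl ?t0_not_reaches_v //.
have [x /andP[ex cx]] := exit_exists k; have [e0 fe0] := exit_edge_exists ex.
have [_ rt _] := exit_edgeP fe0.
by apply/existsP; exists x; rewrite ex cx fe0 /= fconnect_fwd_root.
Qed.

Lemma routingB : routing activeB labelB.
Proof.
exact: Routing labelB_source labelB_in_edge labelB_in_uniq labelB_forward labelB_terminal.
Qed.

End ReachedByAllSources.

Lemma central_vertex_cases v :
  ((c_s tl hd s v, c_t tl hd t v) \in [:: (3, 3); (2, 3); (3, 2)])%N ->
  (exists ob, (forall k, R (s k) v = (ob != Some k)) /\ forall j, R v (t j)) \/
  (exists j0, (forall k, R (s k) v) /\ forall j, R v (t j) = (j != j0)).
Proof.
rewrite !inE /c_s /c_t => /or3P[] /eqP[cs ct].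
- left; exists None; split => [k|j].
    by have := card_ord_setT cs k; rewrite inE => ->.
  by have := card_ord_setT ct j; rewrite inE.
- have [k0 hk] := card_ord_setC1 cs; left; exists (Some k0); split => [k|j].
    by have := hk k; rewrite inE (inj_eq (@Some_inj _)) eq_sym.
  by have := card_ord_setT ct j; rewrite inE.
- have [j0 hj] := card_ord_setC1 ct; right; exists j0; split => [k|j].
    by have := card_ord_setT cs k; rewrite inE.
  by have := hj j; rewrite inE.
Qed.

End Network.

Theorem mainTheorem8 (V E : finType) (tl hd : E -> V) (s t : 'I_3 -> V) :
  acyclic tl hd ->
  injective s -> injective t ->
  (forall (i : 'I_3) (e : E), hd e != s i) ->
  (forall (j : 'I_3) (e : E), tl e != t j) ->
  (forall i j : 'I_3, reaches tl hd (s i) (t j)) ->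
  (exists v : V, ((c_s tl hd s v, c_t tl hd t v) \in
                   [:: (3, 3); (2, 3); (3, 2)])%N) ->
  forall F : finFieldType,
    exists (a : E -> F) (b : E -> E -> F) (d : 'I_3 -> E -> F),
      forall (X : 'I_3 -> F) (Y : E -> F),
        consistent tl hd s a b X Y ->
        forall j : 'I_3, recovers_sum hd t d X Y j.
Proof.
move=> acyc s_inj t_inj hd_s tl_t st [v /central_vertex_cases types] F.
case: types => [[ob [sv vt]] | [j0 [sv vt]]].
- exact: (sum_code_of_routing acyc F (routingA acyc s_inj t_inj hd_s tl_t st sv vt)).
- exact: (sum_code_of_routing acyc F (routingB acyc s_inj hd_s tl_t st sv vt)).
Qed.
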